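(* Let $N\ge 1$ and $k\ge 1$ be integers, let $\beta>0$, and let $\psi_1,\dots,\psi_N\in\mathbb{R}$ be contribution estimates of nodes $i\in[N]$ (the quantities $\beta,\psi_i$ may depend on an accuracy parameter $\epsilon>0$). Define $\varrho_i=\exp(\psi_i/\beta)/\sum_{i'\in[N]}\exp(\psi_{i'}/\beta)$, $q_i=1-(1-\varrho_i)^k$, $\Gamma_i=\sum_{\gamma=0}^{\infty}\gamma\,(1-q_i)^{\gamma}=(1-q_i)/q_i^2$, and $C_i=c(\epsilon)+\Gamma_i$, where $c(\epsilon)=\mathcal{O}(1/\epsilon)$ is common to all nodes. Let $i_*\in\arg\min_{i\in[N]}\psi_i$. If $\Gamma_{i_*}=\mathcal{O}(1/\epsilon)$, then $C_i=\mathcal{O}(1/\epsilon)$ for all $i\in[N]$.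
   Context: Setting: federated learning with $N$ nodes; after a contribution-evaluation phase, each node $i$ has a contribution estimate $\psi_i$. In each subsequent iteration $k$ nodes are sampled with replacement according to $(\varrho_i)$ and synchronize with the latest global model. $\Gamma_i$ is node $i$'s expected staleness (iterations since last synchronization), $c(\epsilon)$ is the expected number of iterations for the global model to reach $\epsilon$-accuracy (of order $\mathcal{O}(1/\epsilon)$ as $\epsilon\to 0$), and $C_i=c(\epsilon)+\Gamma_i$ is node $i$'s expected convergence complexity. Asymptotic notation is as $\epsilon\to 0$. *)

From HB Require Import structures.
From mathcomp Require Import all_boot all_order all_algebra.
From mathcomp Require Import all_classical all_reals all_analysis.
Set Implicit Arguments. Unset Strict Implicit. Unset Printing Implicit Defensive.
Import Order.TTheory GRing.Theory Num.Theory.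
Local Open Scope ring_scope.

Section Defs.
Variables (R : realType) (N : nat).

Definition rho (beta : R) (psi : 'I_N -> R) (i : 'I_N) : R :=
  expR (psi i / beta) / \sum_(j < N) expR (psi j / beta).

(* probability that node i is sampled at least once among k draws with replacement *)
Definition qprob (k : nat) (beta : R) (psi : 'I_N -> R) (i : 'I_N) : R :=
  1 - (1 - rho beta psi i) ^+ k.

(* expected staleness Gamma_i = sum_gamma gamma (1-q_i)^gamma = (1-q_i)/q_i^2 *)
Definition Gamma (k : nat) (beta : R) (psi : 'I_N -> R) (i : 'I_N) : R :=
  (1 - qprob k beta psi i) / (qprob k beta psi i) ^+ 2.

End Defs.

Definition bigO_inv (R : realType) (f : R -> R) : Prop :=
  exists M delta : R, 0 < delta /\
    forall e : R, 0 < e -> e < delta -> `|f e| <= M / e.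

From HB Require Import structures.
From mathcomp Require Import all_boot all_order all_algebra.
From mathcomp Require Import all_classical all_reals all_analysis.
Import Order.TTheory GRing.Theory Num.Theory.
Local Open Scope ring_scope.

(* The staleness (1 - q) / q^2 is nonincreasing in the sampling probability q, the
   probability q_i = 1 - (1 - rho_i)^k is nondecreasing in rho_i, and the softmax
   rho_i is nondecreasing in psi_i.  Hence the node of minimal contribution has
   the largest staleness, and Gamma_i <= Gamma_{i_*} = O(1/eps) for every i;
   adding c(eps) = O(1/eps) keeps the bound. *)

Lemma bigO_invD (R : realType) (f g : R -> R) :
  bigO_inv f -> bigO_inv g -> bigO_inv (fun e => f e + g e).
Proof.
move=> [Mf [df [df_gt0 Hf]]] [Mg [dg [dg_gt0 Hg]]].
exists (Mf + Mg), (Num.min df dg); split; first by rewrite lt_min df_gt0.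
move=> e e_gt0; rewrite lt_min => /andP[e_df e_dg].
rewrite mulrDl (le_trans (ler_normD _ _)) //.
by rewrite lerD ?Hf ?Hg.
Qed.

Lemma bigO_inv_le (R : realType) (f g : R -> R) :
  (forall e, 0 < e -> `|f e| <= `|g e|) -> bigO_inv g -> bigO_inv f.
Proof.
move=> fg [M [d [d_gt0 Hg]]]; exists M, d; split => // e e_gt0 e_d.
exact: le_trans (fg e e_gt0) (Hg e e_gt0 e_d).
Qed.

Section Staleness.
Variable R : numFieldType.

Lemma staleness_ge0 (q : R) : 0 < q -> q <= 1 -> 0 <= (1 - q) / q ^+ 2.
Proof. by move=> q_gt0 q_le1; rewrite divr_ge0 ?subr_ge0 // exprn_ge0 // ltW. Qed.

Lemma staleness_le (q1 q2 : R) : 0 < q1 -> q1 <= q2 -> q2 <= 1 ->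
  (1 - q2) / q2 ^+ 2 <= (1 - q1) / q1 ^+ 2.
Proof.
move=> q1_gt0 q12 q2_le1; have q2_gt0 := lt_le_trans q1_gt0 q12.
apply: (@le_trans _ _ ((1 - q1) / q2 ^+ 2)).
  by apply: ler_wpM2r; rewrite ?invr_ge0 ?exprn_ge0 ?lerB // ltW.
apply: ler_wpM2l; first by rewrite subr_ge0 (le_trans q12).
by rewrite lef_pV2 ?posrE ?exprn_gt0 // lerXn2r // nnegrE ltW.
Qed.

End Staleness.

Section Sampling.
Variables (R : realType) (N k : nat) (beta : R) (psi : 'I_N -> R).

Lemma softmax_den_gt0 (i : 'I_N) : 0 < \sum_(j < N) expR (psi j / beta).
Proof.
rewrite (bigD1 i) //= ltr_wpDr ?expR_gt0 //.
by rewrite sumr_ge0 // => j _; rewrite ltW ?expR_gt0.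
Qed.

Lemma rho_gt0 (i : 'I_N) : 0 < rho beta psi i.
Proof. by rewrite divr_gt0 ?expR_gt0 ?(softmax_den_gt0 i). Qed.

Lemma rho_le1 (i : 'I_N) : rho beta psi i <= 1.
Proof.
rewrite ler_pdivrMr ?(softmax_den_gt0 i) // mul1r (bigD1 i) //= lerDl.
by rewrite sumr_ge0 // => j _; rewrite ltW ?expR_gt0.
Qed.

Lemma rho_le (i j : 'I_N) :
  0 < beta -> psi i <= psi j -> rho beta psi i <= rho beta psi j.
Proof.
move=> beta_gt0 psi_ij.
apply: ler_wpM2r; first by rewrite invr_ge0 ltW ?(softmax_den_gt0 i).
by rewrite ler_expR ler_pM2r ?invr_gt0.
Qed.

Lemma qprob_gt0 (i : 'I_N) : (1 <= k)%N -> 0 < qprob k beta psi i.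
Proof.
move=> k_gt0; have r_gt0 := rho_gt0 i.
rewrite subr_gt0 exprn_ilt1 -?lt0n ?subr_ge0 ?rho_le1 //.
by rewrite ltrBlDr ltrDl.
Qed.

Lemma qprob_le1 (i : 'I_N) : qprob k beta psi i <= 1.
Proof. by rewrite lerBlDr lerDl exprn_ge0 // subr_ge0 rho_le1. Qed.

Lemma qprob_le (i j : 'I_N) :
  0 < beta -> psi i <= psi j -> qprob k beta psi i <= qprob k beta psi j.
Proof.
move=> beta_gt0 psi_ij; rewrite lerB // lerXn2r ?nnegrE ?subr_ge0 ?rho_le1 //.
by rewrite lerB // rho_le.
Qed.

Lemma Gamma_ge0 (i : 'I_N) : (1 <= k)%N -> 0 <= Gamma k beta psi i.
Proof. by move=> k_gt0; rewrite staleness_ge0 ?qprob_gt0 ?qprob_le1. Qed.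

Lemma Gamma_le (i j : 'I_N) : (1 <= k)%N -> 0 < beta -> psi i <= psi j ->
  Gamma k beta psi j <= Gamma k beta psi i.
Proof.
by move=> k_gt0 beta_gt0 psi_ij; rewrite staleness_le ?qprob_gt0 ?qprob_le1 ?qprob_le.
Qed.

End Sampling.

Theorem proposition3 (R : realType) (N k : nat) (hN : (1 <= N)%N) (hk : (1 <= k)%N)
  (beta : R -> R) (psi : R -> 'I_N -> R) (c : R -> R) (istar : R -> 'I_N) :
  (forall e : R, 0 < e -> 0 < beta e) ->
  (forall e : R, 0 < e -> forall i : 'I_N, psi e (istar e) <= psi e i) ->
  bigO_inv c ->
  bigO_inv (fun e => Gamma k (beta e) (psi e) (istar e)) ->
  forall i : 'I_N, bigO_inv (fun e => c e + Gamma k (beta e) (psi e) i).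
Proof.
move=> beta_gt0 istar_min c_bigO Gstar_bigO i.
apply: bigO_invD => //; apply: bigO_inv_le Gstar_bigO => e e_gt0.
rewrite !ger0_norm ?Gamma_ge0 //.
exact: Gamma_le (beta_gt0 e e_gt0) (istar_min e e_gt0 i).
Qed.
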